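(* Fix a finite alphabet $\mathcal{X}$, integers $M_1\ge M_2\ge K\ge1$, reals $\alpha,\beta>0$, and let $\xi_N=\lceil\alpha N\rceil$, $\chi_N=\lceil\beta N\rceil$. For each $N$, let $\Phi_{\mathrm{FL},N}$ be the fixed-length test which observes $(\mathbf{X}^{\xi_N},\mathbf{Y}^{\chi_N})$ and decides $\mathrm{H}_l^K$ with $l=\arg\min_{t\in[T_K]}\mathrm{S}_t^K(\mathbf{X}^{\xi_N},\mathbf{Y}^{\chi_N})$. Then for every $l\in[T_K]$ and every $(P^{M_1},Q^{M_2})\in\mathcal{P}_l^K$, $$\liminf_{N\to\infty}\frac{-\log\beta(\Phi_{\mathrm{FL},N}|P^{M_1},Q^{M_2})}{N}\ge E_{\mathrm{f}}(l,K,P^{M_1},Q^{M_2}).$$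
   Context: Model: $\mathcal{P}(\mathcal{X})$ is the set of distributions on $\mathcal{X}$. For $i\in[M_1]$, $X_i^{\xi_N}=(X_{i,1},\dots,X_{i,\xi_N})$ is i.i.d. $P_i$; for $j\in[M_2]$, $Y_j^{\chi_N}$ is i.i.d. $Q_j$; all independent; within each database the distributions are distinct. A $K$-match is a set of $K$ pairs in $[M_1]\times[M_2]$ with no two pairs sharing a first or a second coordinate; there are $T_K=\binom{M_1}{K}\binom{M_2}{K}K!$ of them, $\mathcal{M}_1^K,\dots,\mathcal{M}_{T_K}^K$. $\mathcal{P}_l^K:=\{(\tilde P^{M_1},\tilde Q^{M_2}):\tilde P_i=\tilde Q_j\text{ iff }(i,j)\in\mathcal{M}_l^K\}$ (hypothesis $\mathrm{H}_l^K$). Mismatch probability $\beta(\Phi|P^{M_1},Q^{M_2})$ = probability, under $(P^{M_1},Q^{M_2})\in\mathcal{P}_l^K$, that the decision differs from $\mathrm{H}_l^K$. Notation: $\hat T_{x^n}$ is the empirical distribution (type) of $x^n$; $D$ is KL divergence; $R_{\alpha,\beta}^{P,Q}=\frac{\alpha P+\beta Q}{\alpha+\beta}$; $\mathrm{GJS}(P,Q,\alpha,\beta)=\alpha D(P\|R_{\alpha,\beta}^{P,Q})+\beta D(Q\|R_{\alpha,\beta}^{P,Q})$; $\mathrm{G}_t^K(P^{M_1},Q^{M_2},\alpha,\beta)=\sum_{(i,j)\in\mathcal{M}_t^K}\mathrm{GJS}(P_i,Q_j,\alpha,\beta)$; $\mathrm{S}_t^K(\mathbf{x}^{\xi_N},\mathbf{y}^{\chi_N})=\mathrm{G}_t^K((\hat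 T_{x_i^{\xi_N}})_i,(\hat T_{y_j^{\chi_N}})_j,\alpha,\beta)$. $E(P^{M_1},Q^{M_2},\Omega^{M_1},\Psi^{M_2},\alpha,\beta)=\sum_{i\in[M_1]}\alpha D(\Omega_i\|P_i)+\sum_{j\in[M_2]}\beta D(\Psi_j\|Q_j)$, and $E_{\mathrm{f}}(l,K,P^{M_1},Q^{M_2}):=\min_{t\in[T_K],t\ne l}\ \min_{(\Omega^{M_1},\Psi^{M_2})\in\mathcal{P}(\mathcal{X})^{M_1+M_2}:\ \mathrm{G}_t^K(\Omega^{M_1},\Psi^{M_2},\alpha,\beta)\le\mathrm{G}_l^K(\Omega^{M_1},\Psi^{M_2},\alpha,\beta)}E(P^{M_1},Q^{M_2},\Omega^{M_1},\Psi^{M_2},\alpha,\beta)$. *)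

From HB Require Import structures.
From mathcomp Require Import all_boot all_order all_algebra.
From mathcomp Require Import all_classical all_reals all_analysis.
Set Implicit Arguments. Unset Strict Implicit. Unset Printing Implicit Defensive.
Import Order.TTheory GRing.Theory Num.Theory.
Local Open Scope ring_scope.

Section Defs.
Variables (R : realType) (X : finType).

Definition is_dist (p : {ffun X -> R}) : Prop :=
  (forall a, 0 <= p a) /\ \sum_(a : X) p a = 1.

Definition emp_type n (x : {ffun 'I_n -> X}) : {ffun X -> R} :=
  [ffun a => #|[set k | x k == a]|%:R / n%:R].

Definition KL (p q : {ffun X -> R}) : \bar R :=
  (\sum_(a : X)
     (if p a == 0%R then 0%E
      else if q a == 0%R then +oo%E
      else (p a * ln (p a / q a))%:E))%E.

Definition mixR (p q : {ffun X -> R}) (al be : R) : {ffun X -> R} :=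
  [ffun a => (al * p a + be * q a) / (al + be)].

Definition GJS (p q : {ffun X -> R}) (al be : R) : \bar R :=
  (al%:E * KL p (mixR p q al be) + be%:E * KL q (mixR p q al be))%E.

Variables (M1 M2 : nat).

Definition is_match (K : nat) (m : {set 'I_M1 * 'I_M2}) : Prop :=
  #|m| = K /\ {in m &, injective (fun ij : 'I_M1 * 'I_M2 => ij.1)}
           /\ {in m &, injective (fun ij : 'I_M1 * 'I_M2 => ij.2)}.

Definition Gm (m : {set 'I_M1 * 'I_M2})
  (Ps : 'I_M1 -> {ffun X -> R}) (Qs : 'I_M2 -> {ffun X -> R}) (al be : R)
  : \bar R :=
  (\sum_(ij in m) GJS (Ps ij.1) (Qs ij.2) al be)%E.

Definition in_hyp (m : {set 'I_M1 * 'I_M2})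
  (Ps : 'I_M1 -> {ffun X -> R}) (Qs : 'I_M2 -> {ffun X -> R}) : Prop :=
  forall i j, Ps i = Qs j <-> (i, j) \in m.

Definition Sm n1 n2 (m : {set 'I_M1 * 'I_M2})
  (x : {ffun 'I_M1 -> {ffun 'I_n1 -> X}}) (y : {ffun 'I_M2 -> {ffun 'I_n2 -> X}})
  (al be : R) : \bar R :=
  Gm m (fun i => emp_type (x i)) (fun j => emp_type (y j)) al be.

Definition db_prob M n (Ps : 'I_M -> {ffun X -> R})
  (x : {ffun 'I_M -> {ffun 'I_n -> X}}) : R :=
  \prod_(i < M) \prod_(k < n) Ps i (x i k).

Definition Eexp (Ps : 'I_M1 -> {ffun X -> R}) (Qs : 'I_M2 -> {ffun X -> R})
  (Om : 'I_M1 -> {ffun X -> R}) (Psi : 'I_M2 -> {ffun X -> R}) (al be : R)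
  : \bar R :=
  (\sum_(i < M1) al%:E * KL (Om i) (Ps i) + \sum_(j < M2) be%:E * KL (Psi j) (Qs j))%E.

(* E_f(l,K,P,Q); the min over t and over (Omega,Psi) is written as an infimum *)
Definition Ef (K : nat) (ml : {set 'I_M1 * 'I_M2})
  (Ps : 'I_M1 -> {ffun X -> R}) (Qs : 'I_M2 -> {ffun X -> R}) (al be : R)
  : \bar R :=
  ereal_inf [set e | exists t Om Psi,
    is_match K t /\ t != ml /\
    (forall i, is_dist (Om i)) /\ (forall j, is_dist (Psi j)) /\
    (Gm t Om Psi al be <= Gm ml Om Psi al be)%E /\
    e = Eexp Ps Qs Om Psi al be].

Definition ssize (a : R) (N : nat) : nat := `|Num.ceil (a * N%:R)|%N.

Definition FLtest (al be : R) :=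
  forall N : nat, {ffun 'I_M1 -> {ffun 'I_(ssize al N) -> X}} ->
    {ffun 'I_M2 -> {ffun 'I_(ssize be N) -> X}} -> {set 'I_M1 * 'I_M2}.

(* Phi_FL,N: the decision is a K-match minimizing S_t^K (any tie-breaking) *)
Definition is_min_S_test (K : nat) (al be : R) (phi : FLtest al be) : Prop :=
  forall N x y, is_match K (phi N x y) /\
    forall t, is_match K t -> (Sm (phi N x y) x y al be <= Sm t x y al be)%E.

Definition mismatch (al be : R) (phi : FLtest al be) (ml : {set 'I_M1 * 'I_M2})
  (Ps : 'I_M1 -> {ffun X -> R}) (Qs : 'I_M2 -> {ffun X -> R}) (N : nat) : R :=
  \sum_(x : {ffun 'I_M1 -> {ffun 'I_(ssize al N) -> X}})
   \sum_(y : {ffun 'I_M2 -> {ffun 'I_(ssize be N) -> X}})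
     (if phi N x y != ml then db_prob Ps x * db_prob Qs y else 0).

Definition err_exponent (b : nat -> R) (N : nat) : \bar R :=
  if b N == 0%R then +oo%E else (- ln (b N) / N%:R)%:E.

End Defs.

From HB Require Import structures.
From mathcomp Require Import all_boot all_order all_algebra.
From mathcomp Require Import all_classical all_reals all_analysis.
From mathcomp Require Import ring lra.
Import Order.TTheory GRing.Theory Num.Theory.
Local Open Scope ring_scope.

(* Method of types.  If the test errs on samples (x, y), it decides some match
   t <> ml with S_t <= S_ml, so the empirical types of x and y are a feasible
   point of the minimisation defining E_f and E_f <= E(P, Q, T_x, T_y).  The
   probability of a sample under P equals its probability under its own type T
   times exp(-n D(T || P)); as n >= alpha N (resp. beta N), every erroneous pair
   has probability at most its self-probability times exp(-N E_f).  The
   self-probabilities of all samples of length n sum to at most (n+1)^|X|, since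
   there are that few types and each type class has self-probability at most 1.
   Hence beta_N <= poly(N) exp(-N E_f), and the polynomial is subexponential. *)

Set Implicit Arguments.
Unset Strict Implicit.

Section Types.
Variables (R : realType) (X : finType).
Implicit Types (p q : {ffun X -> R}).

Lemma prodr_count n (x : {ffun 'I_n -> X}) (f : X -> R) :
  \prod_(k < n) f (x k) = \prod_a f a ^+ #|[set k | x k == a]|.
Proof.
rewrite (partition_big x predT) //=; apply: eq_bigr => a _.
rewrite (eq_bigr (fun=> f a)); last by move=> k /eqP->.
by rewrite -prodr_const; apply: eq_bigl => k; rewrite inE.
Qed.

Lemma sum_count n (x : {ffun 'I_n -> X}) : (\sum_a #|[set k | x k == a]|)%N = n.
Proof.
rewrite -[RHS]card_ord -sum1_card (partition_big x predT) //=.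
by apply: eq_bigr => a _; rewrite -sum1_card; apply: eq_bigl => k; rewrite inE.
Qed.

Lemma emp_type_ge0 n (x : {ffun 'I_n -> X}) a : 0 <= emp_type R x a.
Proof. by rewrite ffunE divr_ge0. Qed.

Lemma emp_type_sum n (x : {ffun 'I_n -> X}) : (0 < n)%N -> \sum_a emp_type R x a = 1.
Proof.
move=> n_gt0; under eq_bigr do rewrite ffunE.
by rewrite -mulr_suml -natr_sum sum_count divff // pnatr_eq0 -lt0n.
Qed.

Lemma emp_type_sum_le1 n (x : {ffun 'I_n -> X}) : \sum_a emp_type R x a <= 1.
Proof.
case: n x => [|n] x; last by rewrite emp_type_sum.
by rewrite big1 // => a _; rewrite ffunE invr0 mulr0.
Qed.

Lemma is_dist_emp_type n (x : {ffun 'I_n -> X}) : (0 < n)%N -> is_dist (emp_type R x).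
Proof. by split; [exact: emp_type_ge0 | exact: emp_type_sum]. Qed.

(* Agrees with [KL] under [abs_cont p q]; elsewhere [x / 0 = 0] makes it finite junk. *)
Definition KLr p q : R := \sum_a (if p a == 0 then 0 else p a * ln (p a / q a)).

Definition abs_cont p q := forall a, p a != 0 -> q a != 0.

Lemma KL_abs_cont p q : abs_cont p q -> KL p q = (KLr p q)%:E.
Proof.
move=> pq; rewrite /KL /KLr -sumEFin; apply: eq_bigr => a _.
by case: eqP => // /eqP pa; rewrite (negbTE (pq a pa)).
Qed.

Lemma ln_le_subr1 (y : R) : 0 < y -> ln y <= y - 1.
Proof.
by move=> y_gt0; have := @le_ln1Dx R (y - 1); rewrite addrCA subrr addr0; apply; lra.
Qed.

Lemma KLr_ge0 p q : is_dist p -> is_dist q -> abs_cont p q -> 0 <= KLr p q.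
Proof.
move=> [p_ge0 p_sum] [q_ge0 q_sum] pq.
rewrite -[0](subrr 1) -[X in X - _]p_sum -[X in _ - X]q_sum -sumrB.
apply: ler_sum => a _; case: eqP => [->|/eqP pa]; first by rewrite sub0r oppr_le0.
have pa_gt0 : 0 < p a by rewrite lt0r pa p_ge0.
have qa_gt0 : 0 < q a by rewrite lt0r pq ?q_ge0.
have := ln_le_subr1 (divr_gt0 qa_gt0 pa_gt0).
rewrite -[p a / q a]invf_div lnV ?posrE ?divr_gt0 // => ln_le.
have := ler_wpM2l (ltW pa_gt0) ln_le.
by rewrite mulrBr mulr1 mulrCA divff ?mulr1 ?gt_eqF // mulrN; lra.
Qed.

Lemma prod_emp_type_KL n (x : {ffun 'I_n -> X}) (P : {ffun X -> R}) :
  (0 < n)%N -> (forall a, 0 <= P a) -> abs_cont (emp_type R x) P ->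
  \prod_k P (x k) = \prod_k emp_type R x (x k) * expR (- (n%:R * KLr (emp_type R x) P)).
Proof.
move=> n_gt0 P_ge0 xP; rewrite !prodr_count /KLr mulr_sumr -sumrN expR_sum -big_split /=.
apply: eq_bigr => a _; set c := #|[set k | x k == a]|.
have n_neq0 : (n%:R : R) != 0 by rewrite pnatr_eq0 -lt0n.
have Ta : emp_type R x a = c%:R / n%:R by rewrite ffunE.
have [c0|c_gt0] := posnP c.
  by rewrite Ta c0 !expr0 mul0r eqxx mulr0 oppr0 expR0 mulr1.
have Ta_neq0 : emp_type R x a != 0 by rewrite Ta mulf_neq0 ?invr_eq0 // pnatr_eq0 -lt0n.
have Pa_gt0 : 0 < P a by rewrite lt0r xP ?P_ge0.
have Ta_gt0 : 0 < emp_type R x a by rewrite lt0r Ta_neq0 emp_type_ge0.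
rewrite (negbTE Ta_neq0).
have -> : n%:R * (emp_type R x a * ln (emp_type R x a / P a)) =
          c%:R * ln (emp_type R x a / P a) by rewrite Ta mulrA mulrCA divff // mulr1.
rewrite expRN expRM_natl lnK ?posrE ?divr_gt0 //.
by rewrite -exprVn invf_div -exprMn mulrC divfK ?gt_eqF.
Qed.

Lemma sum_prod_le1 n (p : X -> R) : (forall a, 0 <= p a) -> \sum_a p a <= 1 ->
  \sum_(x : {ffun 'I_n -> X}) \prod_k p (x k) <= 1.
Proof.
move=> p_ge0 p_le1; rewrite -(bigA_distr_bigA (fun=> p)) /= prodr_const card_ord.
by rewrite exprn_ile1 ?sumr_ge0.
Qed.

Lemma emp_type_eq n (x x' : {ffun 'I_n -> X}) :
  (forall a, #|[set k | x k == a]| = #|[set k | x' k == a]|) ->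
  emp_type R x = emp_type R x'.
Proof. by move=> eq_count; apply/ffunP => a; rewrite !ffunE eq_count. Qed.

Lemma sum_prod_emp_type_le n :
  \sum_(x : {ffun 'I_n -> X}) \prod_k emp_type R x (x k) <= (n.+1 ^ #|X|)%:R.
Proof.
pose count (x : {ffun 'I_n -> X}) : {ffun X -> 'I_n.+1} :=
  [ffun a => inord #|[set k | x k == a]|].
have countE x a : nat_of_ord (count x a) = #|[set k | x k == a]|.
  by rewrite ffunE inordK // ltnS -[n in (_ <= n)%N]card_ord max_card.
have -> : (n.+1 ^ #|X|)%:R = \sum_(c : {ffun X -> 'I_n.+1}) (1 : R).
  by rewrite sumr_const card_ffun card_ord.
rewrite (partition_big count predT) //=; apply: ler_sum => c _.
have [x0 /eqP count_x0|no_x] := pickP (fun x => count x == c); last first.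
  by rewrite big_pred0.
under eq_bigr => x /eqP count_x.
  rewrite (@emp_type_eq _ x x0) => [|a]; last by rewrite -!countE count_x count_x0.
  over.
apply: le_trans (sum_prod_le1 n (emp_type_ge0 x0) (emp_type_sum_le1 x0)).
rewrite [leLHS]big_mkcond /=; apply: ler_sum => x _.
by case: ifP => // _; apply: prodr_ge0 => k _; exact: emp_type_ge0.
Qed.

End Types.

Section Databases.
Variables (R : realType) (X : finType) (M n : nat).
Implicit Types (x : {ffun 'I_M -> {ffun 'I_n -> X}}) (Ps : 'I_M -> {ffun X -> R}).

Definition self_prob x : R := db_prob (fun i => emp_type R (x i)) x.

Lemma db_prob_ge0 Ps x : (forall i a, 0 <= Ps i a) -> 0 <= db_prob Ps x.
Proof. by move=> Ps_ge0; apply: prodr_ge0 => i _; apply: prodr_ge0. Qed.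

Lemma self_prob_ge0 x : 0 <= self_prob x.
Proof. by apply: db_prob_ge0 => i a; exact: emp_type_ge0. Qed.

Lemma sum_self_prob_le : \sum_x self_prob x <= (n.+1 ^ #|X|)%:R ^+ M.
Proof.
rewrite -(bigA_distr_bigA (fun i (xi : {ffun 'I_n -> X}) => \prod_k emp_type R xi (xi k))).
rewrite /= -[M in leRHS](card_ord M) -prodr_const; apply: ler_prod => i _.
rewrite sum_prod_emp_type_le sumr_ge0 // => xi _.
by apply: prodr_ge0 => k _; exact: emp_type_ge0.
Qed.

Lemma db_prob_abs_cont Ps x :
  db_prob Ps x != 0 -> forall i, abs_cont (emp_type R (x i)) (Ps i).
Proof.
move=> /prodf_neq0 /= db_neq0 i a; rewrite ffunE mulf_eq0 negb_or => /andP[+ _].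
rewrite pnatr_eq0 -lt0n => /card_gt0P[k]; rewrite inE => /eqP <-.
by have /prodf_neq0 := db_neq0 i isT; apply.
Qed.

Lemma db_probE Ps x : (0 < n)%N -> (forall i a, 0 <= Ps i a) ->
  (forall i, abs_cont (emp_type R (x i)) (Ps i)) ->
  db_prob Ps x = self_prob x * expR (- (n%:R * \sum_i KLr (emp_type R (x i)) (Ps i))).
Proof.
move=> n_gt0 Ps_ge0 xPs; rewrite /db_prob.
under eq_bigr => i _ do rewrite (prod_emp_type_KL n_gt0 (Ps_ge0 i) (xPs i)).
by rewrite big_split /= -expR_sum mulr_sumr sumrN.
Qed.

End Databases.

Arguments self_prob {R X M n} x.

Section Asymptotics.
Local Open Scope classical_set_scope.
Variable R : realType.
Implicit Types (a c e r s : R) (N : nat).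

Lemma ssizeE a N : 0 <= a -> (ssize a N)%:R = (Num.ceil (a * N%:R))%:~R :> R.
Proof.
move=> a_ge0; rewrite /ssize natr_absz ger0_norm // ceil_ge0.
by rewrite (lt_le_trans _ (mulr_ge0 a_ge0 (ler0n _ N))) ?ltrN10.
Qed.

Lemma ssize_ge a N : 0 <= a -> a * N%:R <= (ssize a N)%:R.
Proof. by move=> a_ge0; rewrite ssizeE ?ceil_ge. Qed.

Lemma ssize_gt0 a N : 0 < a -> (0 < N)%N -> (0 < ssize a N)%N.
Proof.
move=> a_gt0 N_gt0; rewrite -(ltr0n R) (lt_le_trans _ (ssize_ge N (ltW a_gt0))) //.
by rewrite mulr_gt0 ?ltr0n.
Qed.

Lemma ssizeS_le a N : 0 <= a -> (0 < N)%N -> (ssize a N).+1%:R <= (a + 2) * N%:R.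
Proof.
move=> a_ge0 N_gt0; have N_ge1 : 1 <= (N%:R : R) by rewrite ler1n.
have : (ssize a N)%:R < a * N%:R + 1.
  by rewrite ssizeE // -ltrBlDr -[1]/(1%:~R) -intrB ceilB1_lt.
rewrite -addn1 natrD; nra.
Qed.

Lemma ssize_count_le a N k M : 0 <= a -> (0 < N)%N ->
  ((ssize a N).+1 ^ k)%:R ^+ M <= ((a + 2) * N%:R) ^+ (k * M).
Proof.
move=> a_ge0 N_gt0; rewrite natrX -exprM lerXn2r ?nnegrE ?ssizeS_le //.
by rewrite mulr_ge0 ?ler0n // addr_ge0.
Qed.

Lemma poly_le_expR c e (A : nat) : 0 <= c -> 0 < e ->
  \forall N \near \oo, (c * N%:R) ^+ A <= expR (e * N%:R).
Proof.
move=> c_ge0 e_gt0; pose F : R := (A.+1)`!%:R.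
have F_gt0 : 0 < F by rewrite ltr0n fact_gt0.
near=> N.
have eN_ge0 : 0 <= e * N%:R := mulr_ge0 (ltW e_gt0) (ler0n _ N).
apply: le_trans (expR_ge1Dxn A eN_ge0); rewrite -[leLHS]add0r lerD // ler_pdivlMr //.
have -> : (c * N%:R) ^+ A * F = c ^+ A * F * N%:R ^+ A by rewrite exprMn mulrAC.
have -> : (e * N%:R) ^+ A.+1 = e ^+ A.+1 * N%:R * N%:R ^+ A.
  by rewrite exprMn [N%:R ^+ A.+1]exprS mulrA.
apply: ler_wpM2r; first exact: exprn_ge0.
rewrite [leRHS]mulrC -ler_pdivrMr ?exprn_gt0 //.
near: N; exact: nbhs_infty_ger.
Unshelve. all: by end_near.
Qed.

Lemma lee_EFin_subgt0 (x y : \bar R) :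
  (forall r e, (r%:E <= x)%E -> 0 < e -> ((r - e)%:E <= y)%E) -> (x <= y)%E.
Proof.
case: x => [s||] approx; last exact: leNye.
  by apply/lee_subgt0Pr => e e_gt0; rewrite -EFinB approx.
case: y approx => [s||] // approx.
  by exfalso; have := approx (s + 2) 1 (leey _) ltr01; rewrite lee_fin; lra.
by have := approx 0 1 (leey _) ltr01.
Qed.

Lemma err_exponent_ge (b : nat -> R) s : (forall N, 0 <= b N) ->
  (\forall N \near \oo, b N <= expR (- (N%:R * s))) ->
  (s%:E <= limn_einf (err_exponent b))%E.
Proof.
move=> b_ge0 b_le; have : \forall N \near \oo, (s%:E <= err_exponent b N)%E.
  near=> N.
  rewrite /err_exponent; have [_|b_neq0] := eqVneq (b N) 0; first exact: leey.
  have N_gt0 : (0 < N%:R :> R) by rewrite ltr0n; near: N; exact: nbhs_infty_gt.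
  have bN_gt0 : 0 < b N by rewrite lt0r b_neq0 b_ge0.
  have : ln (b N) <= - (N%:R * s).
    by rewrite -[leRHS]expRK ler_ln ?posrE ?expR_gt0 //; near: N.
  by rewrite lee_fin ler_pdivlMr // mulrC; lra.
move=> [N0 _ s_le]; rewrite limn_einf_lim; apply: lime_ge; first exact: is_cvg_einfs.
exists N0 => // N N0_le_N; apply: le_ereal_inf_tmp => _ [k /= N_le_k <-].
by apply: s_le; rewrite /= (leq_trans N0_le_N N_le_k).
Unshelve. all: by end_near.
Qed.

End Asymptotics.

Section ErrorExponent.
Local Open Scope classical_set_scope.
Variables (R : realType) (X : finType) (M1 M2 K : nat) (al be : R).
Hypotheses (al_gt0 : 0 < al) (be_gt0 : 0 < be).
Variables (Ps : 'I_M1 -> {ffun X -> R}) (Qs : 'I_M2 -> {ffun X -> R}).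
Hypotheses (Ps_dist : forall i, is_dist (Ps i)) (Qs_dist : forall j, is_dist (Qs j)).
Variables (phi : FLtest X M1 M2 al be) (ml : {set 'I_M1 * 'I_M2}).
Hypotheses (phi_min : is_min_S_test K phi) (ml_match : is_match K ml).
Arguments phi : clear implicits.

Let al_ge0 : 0 <= al := ltW al_gt0.
Let be_ge0 : 0 <= be := ltW be_gt0.
Let Ps_ge0 i a : 0 <= Ps i a. Proof. by case: (Ps_dist i). Qed.
Let Qs_ge0 j a : 0 <= Qs j a. Proof. by case: (Qs_dist j). Qed.

Lemma EexpE (Om : 'I_M1 -> {ffun X -> R}) (Psi : 'I_M2 -> {ffun X -> R}) :
  (forall i, abs_cont (Om i) (Ps i)) -> (forall j, abs_cont (Psi j) (Qs j)) ->
  Eexp Ps Qs Om Psi al be =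
    (al * \sum_i KLr (Om i) (Ps i) + be * \sum_j KLr (Psi j) (Qs j))%:E.
Proof.
move=> OmPs PsiQs; rewrite /Eexp !mulr_sumr EFinD -!sumEFin.
by congr (_ + _)%E; apply: eq_bigr => ? _; rewrite KL_abs_cont.
Qed.

Lemma db_prob_pair_le n1 n2 (t r : R) (x : {ffun 'I_M1 -> {ffun 'I_n1 -> X}})
    (y : {ffun 'I_M2 -> {ffun 'I_n2 -> X}}) :
  (0 < n1)%N -> (0 < n2)%N -> 0 <= t -> al * t <= n1%:R -> be * t <= n2%:R ->
  (r%:E <= Eexp Ps Qs (fun i => emp_type R (x i)) (fun j => emp_type R (y j)) al be)%E ->
  db_prob Ps x * db_prob Qs y <= self_prob x * self_prob y * expR (- (t * r)).
Proof.
move=> n1_gt0 n2_gt0 t_ge0 n1_ge n2_ge r_le.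
have [->|] := eqVneq (db_prob Ps x * db_prob Qs y) 0.
  by rewrite !mulr_ge0 ?self_prob_ge0 ?expR_ge0.
rewrite mulf_eq0 negb_or => /andP[/db_prob_abs_cont xPs /db_prob_abs_cont yQs].
move: r_le; rewrite EexpE // lee_fin => r_le.
rewrite (db_probE n1_gt0 Ps_ge0 xPs) (db_probE n2_gt0 Qs_ge0 yQs) mulrACA -expRD.
rewrite ler_wpM2l ?mulr_ge0 ?self_prob_ge0 // ler_expR.
set S1 := \sum_i _ in r_le *; set S2 := \sum_j _ in r_le *.
have S1_ge0 : 0 <= S1.
  by apply: sumr_ge0 => i _; apply: KLr_ge0 => //; exact: is_dist_emp_type.
have S2_ge0 : 0 <= S2.
  by apply: sumr_ge0 => j _; apply: KLr_ge0 => //; exact: is_dist_emp_type.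
have := ler_wpM2r S1_ge0 n1_ge; have := ler_wpM2r S2_ge0 n2_ge.
have := ler_wpM2l t_ge0 r_le; nra.
Qed.

Lemma Ef_le_Eexp_emp_type N (x : {ffun 'I_M1 -> {ffun 'I_(ssize al N) -> X}})
    (y : {ffun 'I_M2 -> {ffun 'I_(ssize be N) -> X}}) :
  (0 < N)%N -> phi N x y != ml ->
  (Ef K ml Ps Qs al be <=
     Eexp Ps Qs (fun i => emp_type R (x i)) (fun j => emp_type R (y j)) al be)%E.
Proof.
move=> N_gt0 phi_neq; apply: ereal_inf_lbound.
have [phi_match phi_le] := phi_min x y.
have x_dist i : is_dist (emp_type R (x i)) by exact/is_dist_emp_type/ssize_gt0.
have y_dist j : is_dist (emp_type R (y j)) by exact/is_dist_emp_type/ssize_gt0.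
exists (phi N x y), (fun i => emp_type R (x i)), (fun j => emp_type R (y j)).
by do 4!split=> //; split; first exact: phi_le ml_match.
Qed.

Lemma mismatch_ge0 N : 0 <= mismatch phi ml Ps Qs N.
Proof.
apply: sumr_ge0 => x _; apply: sumr_ge0 => y _; case: ifP => // _.
by rewrite mulr_ge0 ?db_prob_ge0.
Qed.

Lemma mismatch_le N r : (0 < N)%N -> (r%:E <= Ef K ml Ps Qs al be)%E ->
  mismatch phi ml Ps Qs N <= expR (- (N%:R * r)) *
    (((ssize al N).+1 ^ #|X|)%:R ^+ M1 * ((ssize be N).+1 ^ #|X|)%:R ^+ M2).
Proof.
move=> N_gt0 r_le; apply: le_trans (_ : (\sum_x self_prob x) * (\sum_y self_prob y) *
    expR (- (N%:R * r)) <= _).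
  rewrite -mulrA big_distrl /=; apply: ler_sum => x _.
  rewrite big_distrl big_distrr /=; apply: ler_sum => y _; rewrite mulrA.
  case: ifPn => [phi_neq|_]; last by rewrite !mulr_ge0 ?self_prob_ge0 ?expR_ge0.
  apply: db_prob_pair_le; rewrite ?ssize_gt0 ?ler0n ?ssize_ge //.
  exact: le_trans r_le (Ef_le_Eexp_emp_type N_gt0 phi_neq).
rewrite mulrC ler_wpM2l ?expR_ge0 // ler_pM ?sum_self_prob_le //.
  by apply: sumr_ge0 => x _; exact: self_prob_ge0.
by apply: sumr_ge0 => y _; exact: self_prob_ge0.
Qed.

Lemma mismatch_decay r e : (r%:E <= Ef K ml Ps Qs al be)%E -> 0 < e ->
  \forall N \near \oo, mismatch phi ml Ps Qs N <= expR (- (N%:R * (r - e))).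
Proof.
move=> r_le e_gt0; have e2_gt0 : 0 < e / 2 by rewrite divr_gt0.
have al2_ge0 : 0 <= al + 2 by rewrite addr_ge0.
have be2_ge0 : 0 <= be + 2 by rewrite addr_ge0.
near=> N; have N_gt0 : (0 < N)%N by near: N; exact: nbhs_infty_gt.
apply: le_trans (mismatch_le N_gt0 r_le) _.
have -> : - (N%:R * (r - e)) = - (N%:R * r) + (e / 2 * N%:R + e / 2 * N%:R).
  by field.
rewrite expRD ler_wpM2l ?expR_ge0 // expRD ler_pM ?exprn_ge0 ?ler0n //.
- apply: le_trans (ssize_count_le _ _ al_ge0 N_gt0) _.
  by near: N; exact: poly_le_expR.
- apply: le_trans (ssize_count_le _ _ be_ge0 N_gt0) _.
  by near: N; exact: poly_le_expR.
Unshelve. all: by end_near.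
Qed.

End ErrorExponent.

Theorem theorem2 (R : realType) (X : finType) (M1 M2 K : nat) (al be : R)
  (hM : (M2 <= M1)%N) (hK : (K <= M2)%N) (hK1 : (1 <= K)%N)
  (hal : 0 < al) (hbe : 0 < be)
  (phi : FLtest X M1 M2 al be) (hphi : is_min_S_test K phi)
  (ml : {set 'I_M1 * 'I_M2}) (hml : is_match K ml)
  (Ps : 'I_M1 -> {ffun X -> R}) (Qs : 'I_M2 -> {ffun X -> R})
  (hP : forall i, is_dist (Ps i)) (hQ : forall j, is_dist (Qs j))
  (hPinj : injective Ps) (hQinj : injective Qs)
  (hH : in_hyp ml Ps Qs) :
  (Ef K ml Ps Qs al be <=
     limn_einf (err_exponent (mismatch phi ml Ps Qs)))%E.
Proof.
apply: lee_EFin_subgt0 => r e r_le e_gt0.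
apply: err_exponent_ge; first exact: mismatch_ge0.
exact: mismatch_decay.
Qed.
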